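(* Let $\mathcal{H}_1$ and $\mathcal{H}_2$ be two hypertrees with the same vertex set $V$. Then $\mathcal{H}_1$ and $\mathcal{H}_2$ are equivalent if and only if they have the same basic sets. Moreover, if $\mathcal{H}_1$ and $\mathcal{H}_2$ have a common host tree $T$, then they are equivalent if and only if $I_{\mathcal{H}_1}(uv)=I_{\mathcal{H}_2}(uv)$ for every edge $uv$ of $T$.
   Context: A hypergraph $\mathcal{H}$ has a finite vertex set $V(\mathcal{H})$ and a finite family of nonempty subsets (edges). A host tree of $\mathcal{H}$ is a tree with vertex set $V(\mathcal{H})$ in which every edge induces a connected subgraph; $\mathcal{H}$ is a hypertree if it has one. Hypergraphs on the same vertex set are equivalent if they have the same host trees. For $V'\subseteq V(\mathcal{H})$, $I_\mathcal{H}(V')$ is the intersection of all edges of $\mathcal{H}$ containing $V'$, or $V(\mathcal{H})$ if none does; $I_\mathcal{H}(uv)=I_\mathcal{H}(\{u,v\})$. A union of sets is connected if the intersection graph of the sets is connected. $Comp(\mathcal{H})$ is the hypergraph without repeated edges on $V(\mathcal{H})$ whose edges are $V(\mathcal{H})$, all one-element subsets, and all proper subsets obtainable from edges of $\mathcal{H}$ by repeated nonempty intersections and connected unions. A basic set of $\mathcal{H}$ is an edge of $Comp(\mathcal{H})$ with more than one vertex that is not a connected union of strictly smaller edges of $Comp(\mathcal{H})$. *)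

From mathcomp Require Import all_boot.
Set Implicit Arguments. Unset Strict Implicit. Unset Printing Implicit Defensive.

(* A hypergraph on the (finite) vertex set T is a finite family (sequence,
   repetitions allowed) of subsets of T; nonemptiness of edges is a
   hypothesis of the theorem. *)
Definition hypergraph (T : finType) := seq {set T}.

Section Defs.
Variable T : finType.

(* A graph on T is given by its set of edges; a graph edge is a 2-element set. *)
Definition gadj (E : {set {set T}}) : rel T :=
  [rel x y | (x != y) && ([set x; y] \in E)].

Definition induced_connected (E : {set {set T}}) (S : {set T}) : bool :=
  [forall x in S, forall y in S,
     connect [rel a b | [&& a \in S, b \in S & gadj E a b]] x y].

Definition is_tree (E : {set {set T}}) : Prop :=
  [/\ [set: T] != set0,
      (forall e, e \in E -> #|e| = 2),
      induced_connected E [set: T] &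
      (forall e, e \in E -> ~~ induced_connected (E :\ e) [set: T])].

Definition host_tree (H : hypergraph T) (E : {set {set T}}) : Prop :=
  is_tree E /\ (forall e, e \in H -> induced_connected E e).

Definition hypertree (H : hypergraph T) : Prop := exists E, host_tree H E.

Definition equivalent (H1 H2 : hypergraph T) : Prop :=
  forall E, host_tree H1 E <-> host_tree H2 E.

(* I_H(V'): intersection of all edges containing V' (setT if none). *)
Definition Icap (H : hypergraph T) (V' : {set T}) : {set T} :=
  \bigcap_(e <- H | V' \subset e) e.

Definition family_connected (F : {set {set T}}) : bool :=
  [forall A in F, forall B in F,
     connect [rel X Y | [&& X \in F, Y \in F & X :&: Y != set0]] A B].

Inductive obtainable (H : hypergraph T) : {set T} -> Prop :=
| ob_edge e : e \in H -> obtainable H e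
| ob_cap A B : obtainable H A -> obtainable H B -> A :&: B != set0 ->
    obtainable H (A :&: B)
| ob_cup (F : {set {set T}}) : F != set0 ->
    (forall A, A \in F -> obtainable H A) -> family_connected F ->
    obtainable H (\bigcup_(A in F) A).

Definition comp_edge (H : hypergraph T) (S : {set T}) : Prop :=
  S = [set: T] \/ (exists x, S = [set x]) \/ (obtainable H S /\ S != [set: T]).

Definition basic_set (H : hypergraph T) (S : {set T}) : Prop :=
  comp_edge H S /\ 1 < #|S| /\
  ~ (exists F : {set {set T}},
       [/\ F != set0,
           (forall A, A \in F -> comp_edge H A /\ A \proper S),
           family_connected F &
           \bigcup_(A in F) A = S]).

End Defs.

From mathcomp Require Import all_boot.
From Stdlib Require Import Classical.
Set Implicit Arguments. Unset Strict Implicit. Unset Printing Implicit Defensive.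

(* Every set obtainable from the edges of H by nonempty intersections and
   connected unions induces a subtree of every host tree of H, and conversely a
   tree in which all basic sets induce subtrees is a host tree, because every
   edge of Comp(H) is a connected union of basic sets.  So hypertrees with the
   same basic sets are equivalent.

   Let E be a host tree of H and uv an edge of E.  Replacing uv by an edge ab
   joining the two components of E - uv gives again a tree, and that tree is a
   host tree of H exactly when a, b lie in I_H(uv).  Hence equivalent hypertrees
   with the common host tree E have the same sets I_H(uv) on the edges of E.
   Conversely these sets determine the host trees: a set S of size at least 2
   that induces a subtree of E is the connected union of the sets I_H(g) over
   the edges g of E inside S, and I_H(g) lies in S whenever S is obtainable.
   The same decomposition shows that equivalent hypertrees have the same edges
   of Comp(H), hence the same basic sets. *)

Section Connect.
Variables (T : finType) (r : rel T).

Lemma connect_ind (P : T -> Prop) x y :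
  (forall a b, r a b -> P a -> P b) -> connect r x y -> P x -> P y.
Proof.
move=> step /connectP[p]; elim: p x => [|z p IH] x /=; first by move=> _ ->.
by case/andP=> rxz pz ey Px; apply: IH z pz ey (step _ _ rxz Px).
Qed.

Lemma connect_exit (A : {pred T}) x y : connect r x y -> x \in A -> y \notin A ->
  exists a b, [/\ r a b, a \in A & b \notin A].
Proof.
move=> cxy xA /negP yA; apply: NNPP => noexit; apply: yA.
apply: (@connect_ind (fun z => z \in A) x y) cxy xA => a b rab aA.
by apply: contraPT noexit => bA; apply; exists a, b.
Qed.

Lemma connect_subrel (r' : rel T) : subrel r r' -> subrel (connect r) (connect r').
Proof. by move=> rr'; apply: connect_sub => x y /rr' /connect1. Qed.

End Connect.

Section Induced.
Variable T : finType.

Definition induced (A : {set T}) (r : rel T) : rel T :=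
  [rel a b | [&& a \in A, b \in A & r a b]].

Lemma connect_induced_in A (r : rel T) a b :
  connect (induced A r) a b -> a \in A -> b \in A.
Proof.
by move=> cab; apply: (connect_ind (P := fun c => c \in A)) cab => c d /and3P[].
Qed.

Lemma connect_inducedT (r : rel T) : connect (induced setT r) =2 connect r.
Proof. by apply: eq_connect => a b; rewrite /induced /= !in_setT. Qed.

End Induced.

Section Graphs.
Variable T : finType.
Implicit Types (E : {set {set T}}) (A B S f g : {set T}) (a b p q u v x y z : T).

Lemma gadj_sym E : symmetric (gadj E).
Proof. by move=> x y; rewrite /gadj /= eq_sym setUC. Qed.

Lemma gadjS E E' : E \subset E' -> subrel (gadj E) (gadj E').
Proof. by move=> sEE' a b /andP[nab abE]; rewrite /gadj /= nab (subsetP sEE'). Qed.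

Lemma connect_gadjC E x y : connect (gadj E) x y = connect (gadj E) y x.
Proof. exact: (sym_connect_sym (gadj_sym E)). Qed.

Lemma connect_inducedC E A x y :
  connect (induced A (gadj E)) x y = connect (induced A (gadj E)) y x.
Proof.
apply: sym_connect_sym => a b; rewrite /induced /= gadj_sym.
by case: (a \in A); case: (b \in A).
Qed.

Lemma induced_connectedP E S :
  reflect {in S &, forall x y, connect (induced S (gadj E)) x y}
          (induced_connected E S).
Proof.
apply: (iffP forall_inP) => [cS x y xS|cS x xS].
  by move/forall_inP: (cS x xS); apply.
by apply/forall_inP=> y; apply: cS.
Qed.

Lemma induced_connectedT E :
  induced_connected E setT <-> forall x y, connect (gadj E) x y.
Proof.
split=> [/induced_connectedP cE x y|cE].
  by rewrite -connect_inducedT; apply: cE.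
by apply/induced_connectedP=> x y _ _; rewrite connect_inducedT.
Qed.

Lemma induced_connected_small E S : #|S| <= 1 -> induced_connected E S.
Proof.
move=> S_le1; apply/induced_connectedP=> x y xS yS.
suff -> : x = y by apply: connect0.
apply: contraTeq S_le1 => nxy; rewrite -ltnNge (cardsD1 x) xS add1n ltnS card_gt0.
by apply/set0Pn; exists y; rewrite !inE yS eq_sym nxy.
Qed.

Lemma eq_set2 a b u v : a != b -> [set a; b] = [set u; v] :> {set T} ->
  (a = u /\ b = v) \/ (a = v /\ b = u).
Proof.
move=> nab e; move: (set21 a b) (set22 a b); rewrite e.
by move=> /set2P[] ea /set2P[] eb; subst; rewrite ?eqxx in nab; by [left|right].
Qed.

Lemma induced_gadjD E S u v : (u \notin S) || (v \notin S) ->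
  subrel (induced S (gadj E)) (gadj (E :\ [set u; v])).
Proof.
move=> uvS a b /and3P[aS bS /andP[nab abE]].
rewrite /gadj /= nab in_setD1 abE andbT; apply: contraTneq uvS => e.
by rewrite negb_or !negbK; case: (eq_set2 nab e) => -[<- <-]; rewrite aS bS.
Qed.

Lemma induced_connected_replace E E' S u v :
  induced_connected E S -> {subset E :\ [set u; v] <= E'} ->
  (u \in S -> v \in S -> connect (induced S (gadj E')) u v) ->
  induced_connected E' S.
Proof.
move=> /induced_connectedP cS sEE' cuv; apply/induced_connectedP=> x y xS yS.
apply: connect_sub (cS x y xS yS) => p q /and3P[pS qS /andP[npq pqE]].
case: (eqVneq [set p; q] [set u; v]) => [e|ne]; last first.
  by apply: connect1; rewrite /induced /gadj /= pS qS npq sEE' // in_setD1 ne.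
case: (eq_set2 npq e) => -[-> ->] in pS qS *; last rewrite connect_inducedC.
  all: exact: cuv.
Qed.

Definition side E u v := [set z | connect (gadj (E :\ [set u; v])) u z].

Lemma side_self E u v : u \in side E u v.
Proof. by rewrite inE connect0. Qed.

Lemma side_closed E u v : closed (gadj (E :\ [set u; v])) (side E u v).
Proof.
move=> a b ab; rewrite !inE.
exact: (connect_closed (sym_connect_sym (gadj_sym _)) u ab).
Qed.

Lemma side_connected E u v : induced_connected E (side E u v).
Proof.
suff cu z : z \in side E u v -> connect (induced (side E u v) (gadj E)) u z.
  apply/induced_connectedP=> x y /cu xu /cu yu.
  by rewrite connect_inducedC in xu; apply: connect_trans xu yu.
rewrite [z \in _]inE => uz.
pose P c := c \in side E u v /\ connect (induced (side E u v) (gadj E)) u c.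
suff : P z by case.
apply: (connect_ind (P := P)) uz _; last by split; [apply: side_self|apply: connect0].
move=> a b ab [sa ca]; have sb : b \in side E u v by rewrite -(side_closed ab).
split=> //; apply: connect_trans ca (connect1 _).
by rewrite /induced /= sa sb (gadjS (subD1set E _) ab).
Qed.

Lemma connected_cross E S u v x y : induced_connected E S ->
  x \in S -> y \in S -> x \in side E u v -> y \notin side E u v ->
  u \in S /\ v \in S.
Proof.
move=> /induced_connectedP cS xS yS xs ys.
case: (boolP ((u \in S) && (v \in S))) => [/andP//|]; rewrite negb_and => uvS.
have cxy := connect_subrel (induced_gadjD uvS) (cS x y xS yS).
by rewrite -(closed_connect (@side_closed E u v) cxy) xs in ys.
Qed.

(* [S] meets only one side of each edge [uv] unless it contains [u] and [v];
   in a tree this characterizes the sets inducing subtrees. *)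
Definition edge_convex E S := forall u v, [set u; v] \in E ->
  [\/ S \subset side E u v, S :&: side E u v = set0 | u \in S /\ v \in S].

Lemma connected_edge_convex E S : induced_connected E S -> edge_convex E S.
Proof.
move=> cS u v _.
case: (boolP (S \subset side E u v)) => [|/subsetPn[y yS ys]]; first by constructor 1.
case: (set_0Vmem (S :&: side E u v)) => [|[x /setIP[xS xs]]]; first by constructor 2.
by constructor 3; apply: connected_cross cS xS yS xs ys.
Qed.

Lemma family_connected_ind F (P : {set T} -> Prop) A B :
  family_connected F -> A \in F -> B \in F ->
  (forall X Y, X \in F -> Y \in F -> X :&: Y != set0 -> P X -> P Y) ->
  P A -> P B.
Proof.
move=> /forall_inP cF AF BF step; move/forall_inP: (cF A AF) => /(_ B BF).
by apply: connect_ind => X Y /and3P[XF YF]; apply: step.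
Qed.

Lemma induced_connected_bigcup E F : family_connected F ->
  (forall A, A \in F -> induced_connected E A) ->
  induced_connected E (\bigcup_(A in F) A).
Proof.
move=> cF cA; apply/induced_connectedP=> x y /bigcupP[A AF xA] /bigcupP[B BF yB].
set U := \bigcup_(A in F) A.
pose C := [set c | connect (induced U (gadj E)) x c].
have sub_C X : X \in F -> forall c, c \in X -> c \in C -> X \subset C.
  move=> XF c cX; rewrite inE => xc; apply/subsetP=> z zX; rewrite inE.
  have sXU : subrel (induced X (gadj E)) (induced U (gadj E)).
    by move=> a b /and3P[aX bX ab]; rewrite /induced /= ab !(subsetP (bigcup_sup X XF)).
  move/induced_connectedP: (cA X XF) => /(_ c z cX zX) /(connect_subrel sXU).
  exact: connect_trans xc.
have /subsetP : B \subset C; last by move/(_ y yB); rewrite inE.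
apply: (family_connected_ind (P := fun X => X \subset C) cF AF BF).
  move=> X Y XF YF /set0Pn[z /setIP[zX zY]] /subsetP XC.
  exact: (sub_C Y YF z zY (XC z zX)).
by apply: (sub_C A AF x xA); rewrite inE connect0.
Qed.

Lemma edge_through E S x : induced_connected E S -> 1 < #|S| -> x \in S ->
  exists g, [/\ g \in E, x \in g & g \subset S].
Proof.
move=> /induced_connectedP cS S_gt1 xS.
have [y yS yx] : exists2 y, y \in S & y \notin [set x].
  move: S_gt1; rewrite (cardsD1 x) xS add1n ltnS card_gt0 => /set0Pn[y].
  by rewrite !inE => /andP[yx yS]; exists y; rewrite // inE.
have [a [b [/and3P[aS bS /andP[_ abE]] /set1P ax _]]] :=
  connect_exit (cS x y xS yS) (set11 x) yx.
by exists [set a; b]; rewrite -ax set21 subUset !sub1set aS bS.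
Qed.

Definition edge_images E S (G : {set T} -> {set T}) :=
  [set G g | g in [set g in E | g \subset S]].

Lemma closed_disconnected E (Z : {set T}) p q : closed (gadj E) Z ->
  (p \in Z) != (q \in Z) -> ~~ induced_connected E setT.
Proof.
by move=> clZ; apply: contra => /induced_connectedT /(_ p q) /(closed_connect clZ) ->.
Qed.

Definition swap_edge E u v a b : {set {set T}} := [set a; b] |: (E :\ [set u; v]).

Lemma subset_swap_edge E u v a b : E :\ [set u; v] \subset swap_edge E u v a b.
Proof. exact: subsetUr. Qed.

Lemma swap_edge_adj E u v a b : a != b -> gadj (swap_edge E u v a b) a b.
Proof. by move=> nab; rewrite /gadj /= nab setU11. Qed.

Section Tree.
Variable E : {set {set T}}.
Hypothesis tE : is_tree E.

Lemma tree_connect x y : connect (gadj E) x y.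
Proof. by case: tE => _ _ /induced_connectedT. Qed.

Lemma tree_edgeP g : g \in E -> exists u v, u != v /\ g = [set u; v].
Proof. by case: tE => _ E2 _ _ /E2 /eqP /cards2P. Qed.

Lemma tree_acyclic u v : [set u; v] \in E -> ~~ connect (gadj (E :\ [set u; v])) u v.
Proof.
move=> uvE; case: tE => _ _ cE /(_ _ uvE); apply: contra => cuv.
apply: (induced_connected_replace (u := u) (v := v) cE) => // _ _.
by rewrite connect_inducedT.
Qed.

Lemma side_notin u v : [set u; v] \in E -> v \notin side E u v.
Proof. by rewrite inE; apply: tree_acyclic. Qed.

Lemma side_compl u v z : [set u; v] \in E ->
  z \notin side E u v -> z \in side E v u.
Proof.
move=> uvE; apply/implyP; rewrite implyNb.
apply: (connect_ind (P := fun c => (c \in side E u v) || (c \in side E v u)))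
  (tree_connect u z) _; last by rewrite side_self.
move=> a b /andP[nab abE]; case: (eqVneq [set a; b] [set u; v]) => [e|ne].
  have : b \in [set u; v] by rewrite -e set22.
  by case/set2P=> ->; rewrite side_self ?orbT.
have ab : gadj (E :\ [set u; v]) a b by rewrite /gadj /= nab in_setD1 ne.
have ba : gadj (E :\ [set v; u]) a b by rewrite setUC.
by rewrite (side_closed ab) (side_closed ba).
Qed.

Lemma edge_convex_connected S : edge_convex E S -> induced_connected E S.
Proof.
move=> convS; apply/induced_connectedP=> x y xS yS; apply: contraT => nxy.
pose C := [set c | connect (induced S (gadj E)) x c].
pose Y := [set c | connect (induced (~: C) (gadj E)) y c].
have notC_Y c : c \in Y -> c \in ~: C.
  by rewrite inE => /connect_induced_in; apply; rewrite !inE.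
have xY : x \notin Y by apply/negP=> /notC_Y; rewrite !inE connect0.
have yY : y \in Y by rewrite inE connect0.
have [z [w [zw zY wY]]] := connect_exit (tree_connect y x) yY xY.
have wC : w \in C.
  apply: contraNT wY => wC; have zC := notC_Y z zY.
  rewrite /Y !inE in zY *; apply: connect_trans zY (connect1 _).
  by rewrite /induced /= zC inE wC.
have xw : connect (induced S (gadj E)) x w by move: wC; rewrite inE.
have yz : connect (induced (~: C) (gadj E)) y z by move: zY; rewrite inE.
have zS : z \notin S.
  apply: contraL (notC_Y z zY) => zS; rewrite !inE negbK.
  apply: (connect_trans xw); apply: connect1.
  by rewrite /induced /= zS gadj_sym zw (connect_induced_in xw xS).
have wzE : [set w; z] \in E by rewrite setUC; case/andP: zw.
have xs : x \in side E w z.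
  rewrite inE connect_gadjC; apply: connect_subrel xw.
  by apply: induced_gadjD; rewrite zS orbT.
have ys : y \notin side E w z.
  apply: contra (side_notin wzE); rewrite !inE => wy.
  apply: (connect_trans wy); apply: connect_subrel yz.
  by apply: induced_gadjD; rewrite inE negbK wC.
case: (convS w z wzE) => [/subsetP/(_ y yS)|/setP/(_ x)|[_ zS']].
- by rewrite (negbTE ys).
- by rewrite in_setI xS xs in_set0.
- by rewrite zS' in zS.
Qed.

Lemma induced_connectedI A B : induced_connected E A -> induced_connected E B ->
  induced_connected E (A :&: B).
Proof.
move=> /connected_edge_convex cA /connected_edge_convex cB.
apply: edge_convex_connected => u v uvE.
case: (cA u v uvE) => [sA|dA|[uA vA]].
- by constructor 1; apply: subset_trans sA; apply: subsetIl.
- by constructor 2; rewrite setIAC dA set0I.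
case: (cB u v uvE) => [sB|dB|[uB vB]].
- by constructor 1; apply: subset_trans sB; apply: subsetIr.
- by constructor 2; rewrite -setIA dB setI0.
by constructor 3; rewrite !inE uA vA uB vB.
Qed.

Lemma tree_edge_neq0 g : g \in E -> g != set0.
Proof. by move=> /tree_edgeP[u [v [_ ->]]]; apply/set0Pn; exists u; rewrite set21. Qed.

Lemma family_edge_member F u v : [set u; v] \in E -> family_connected F ->
  (forall A, A \in F -> induced_connected E A) ->
  u \in \bigcup_(A in F) A -> v \in \bigcup_(A in F) A ->
  exists2 A, A \in F & u \in A /\ v \in A.
Proof.
move=> uvE cF cA /bigcupP[Au AuF uAu] /bigcupP[Av AvF vAv]; apply: NNPP => noA.
have in_side X c : X \in F -> c \in X -> c \in side E u v -> X \subset side E u v.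
  move=> XF cX cs; apply/subsetP=> d dX; apply: contraT => ds.
  by case: noA; exists X => //; apply: connected_cross (cA X XF) cX dX cs ds.
have : Av \subset side E u v.
  apply: (family_connected_ind (P := fun X => X \subset side E u v) cF AuF AvF).
    move=> X Y _ YF /set0Pn[c /setIP[cX cY]] /subsetP XS.
    exact: (in_side Y c YF cY (XS c cX)).
  exact: (in_side Au u AuF uAu (side_self E u v)).
by move/subsetP/(_ v vAv); apply/negP; apply: side_notin.
Qed.

Section EdgeImages.
Variables (S : {set T}) (G : {set T} -> {set T}).
Hypothesis cS : induced_connected E S.
Hypothesis G_between : forall g, g \in E -> g \subset S -> g \subset G g /\ G g \subset S.

Lemma mem_edge_images g : g \in E -> g \subset S -> G g \in edge_images E S G.
Proof. by move=> gE gS; apply: imset_f; rewrite inE gE. Qed.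

Lemma edge_images_connected : family_connected (edge_images E S G).
Proof.
set F := edge_images E S G.
pose FR := [rel X Y | [&& X \in F, Y \in F & X :&: Y != set0]].
have adj g g' z : g \in E -> g \subset S -> g' \in E -> g' \subset S ->
    z \in g -> z \in g' -> connect FR (G g) (G g').
  move=> gE gS g'E g'S zg zg'; apply: connect1; rewrite /= !mem_edge_images //.
  apply/set0Pn; exists z; rewrite inE.
  by rewrite (subsetP (G_between gE gS).1) // (subsetP (G_between g'E g'S).1).
apply/forall_inP=> A /imsetP[g1]; rewrite inE => /andP[g1E g1S] ->.
apply/forall_inP=> B /imsetP[g2]; rewrite inE => /andP[g2E g2S] ->.
have [x1 x1g] := set0Pn _ (tree_edge_neq0 g1E).
have [x2 x2g] := set0Pn _ (tree_edge_neq0 g2E).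
pose P z := exists2 g, [/\ g \in E, g \subset S & z \in g] & connect FR (G g1) (G g).
have [g [gE gS x2g'] c1g] : P x2.
  move/induced_connectedP: cS => /(_ x1 x2 (subsetP g1S x1 x1g) (subsetP g2S x2 x2g)) c12.
  apply: (connect_ind (P := P) _ c12); last by exists g1 => //; apply: connect0.
  move=> a b /and3P[aS bS /andP[_ abE]] [g [gE gS ag] c1g].
  have abS : [set a; b] \subset S by rewrite subUset !sub1set aS.
  exists [set a; b]; first by rewrite set22.
  exact: connect_trans c1g (adj _ _ a gE gS abE abS ag (set21 a b)).
exact: connect_trans c1g (adj _ _ x2 gE gS g2E g2S x2g' x2g).
Qed.

Hypothesis S_gt1 : 1 < #|S|.

Lemma bigcup_edge_images : \bigcup_(A in edge_images E S G) A = S.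
Proof.
apply/eqP; rewrite eqEsubset; apply/andP; split.
  apply/bigcupsP=> A /imsetP[g]; rewrite inE => /andP[gE gS] ->.
  exact: (G_between gE gS).2.
apply/subsetP=> x xS; have [g [gE xg gS]] := edge_through cS S_gt1 xS.
apply/bigcupP; exists (G g); first exact: mem_edge_images.
exact: subsetP (G_between gE gS).1 x xg.
Qed.

Lemma edge_images_neq0 : edge_images E S G != set0.
Proof.
have [x xS] : exists x, x \in S by apply/set0Pn; rewrite -card_gt0 ltnW.
have [g [gE _ gS]] := edge_through cS S_gt1 xS.
by apply/set0Pn; exists (G g); apply: mem_edge_images.
Qed.

End EdgeImages.

Section SwapEdge.
Variables u v a b : T.
Hypotheses (uvE : [set u; v] \in E) (a_side : a \in side E u v).
Hypothesis b_side : b \notin side E u v.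

Lemma swap_edge_cut g : g \in swap_edge E u v a b ->
  ~~ induced_connected (swap_edge E u v a b :\ g) setT.
Proof.
rewrite in_setU1 => /orP[/eqP->|/setD1P[ne_uv gE]].
  apply: (closed_disconnected (Z := side E u v) (p := u) (q := v)); last first.
    by rewrite side_self (negbTE (side_notin uvE)).
  move=> x y /(gadjS _) xy; apply: side_closed; apply: xy.
  by apply/subsetP=> e /setD1P[ne]; rewrite in_setU1 (negbTE ne).
have [p [q [npq gpq]]] := tree_edgeP gE; subst g.
(* [Z] is closed under the remaining edges and separates [p] from [q]: if [ab]
   crosses [pq] it is the set of points on corresponding sides of [pq] and [uv],
   otherwise the complement of the side of [pq] containing [p]. *)
pose c := (a \in side E p q) != (b \in side E p q).
pose Z := [set z | (z \in side E p q) == c && (z \in side E u v)].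
apply: (closed_disconnected (Z := Z) (p := p) (q := q)) => [x y /andP[nxy]|].
  rewrite in_setD1 in_setU1 => /andP[ne_pq /orP[/eqP e|xyE]].
    have abZ : (a \in Z) = (b \in Z).
      rewrite [a \in Z]inE [b \in Z]inE a_side (negbTE b_side) andbT andbF /c.
      by case: (a \in side E p q); case: (b \in side E p q).
    by case: (eq_set2 nxy e) => -[-> ->].
  have xy_uv : gadj (E :\ [set u; v]) x y by rewrite /gadj /= nxy.
  have xy_pq : gadj (E :\ [set p; q]) x y.
    by rewrite /gadj /= nxy in_setD1 ne_pq; case/setD1P: xyE.
  by rewrite [x \in Z]inE [y \in Z]inE (side_closed xy_uv) (side_closed xy_pq).
have pq_uv : gadj (E :\ [set u; v]) p q by rewrite /gadj /= npq in_setD1 ne_uv.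
rewrite [p \in Z]inE [q \in Z]inE side_self (negbTE (side_notin gE)) (side_closed pq_uv).
by case: (c && _).
Qed.

Lemma swap_edge_tree : is_tree (swap_edge E u v a b).
Proof.
have nab : a != b by apply: contraNneq b_side => <-.
have sub := subset_swap_edge E u v a b.
case: (tE) => T0 E2 cE _; split=> //; last exact: swap_edge_cut.
  move=> g; rewrite in_setU1 => /orP[/eqP->|/setD1P[_ /E2]] //.
  by rewrite cards2 nab.
apply: (induced_connected_replace (u := u) (v := v) cE) => [e /(subsetP sub) //|_ _].
have ua : connect (gadj (E :\ [set u; v])) u a by move: a_side; rewrite inE.
have vb := side_compl uvE b_side; rewrite inE setUC connect_gadjC in vb.
rewrite connect_inducedT; apply: connect_trans (connect_subrel (gadjS sub) ua) _.
apply: connect_trans (connect1 (@swap_edge_adj E u v a b nab)) _.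
exact: connect_subrel (gadjS sub) _ _ vb.
Qed.

Lemma swap_edge_induced_mem S : induced_connected (swap_edge E u v a b) S ->
  u \in S -> v \in S -> a \in S /\ b \in S.
Proof.
move=> /induced_connectedP cS uS vS.
case: (boolP ((a \in S) && (b \in S))) => [/andP//|abS]; exfalso.
move/negP: (tree_acyclic uvE); apply; apply: connect_subrel (cS u v uS vS).
move=> x y /and3P[xS yS /andP[nxy]]; rewrite in_setU1 => /orP[/eqP e|xyE].
  by case: (eq_set2 nxy e) abS => -[<- <-]; rewrite xS yS.
by rewrite /gadj /= nxy.
Qed.

Lemma swap_edge_induced_connected S : induced_connected E S ->
  (u \in S -> v \in S -> a \in S /\ b \in S) ->
  induced_connected (swap_edge E u v a b) S.
Proof.
set E' := swap_edge E u v a b; have sub := subset_swap_edge E u v a b.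
move=> cS abS; apply: (induced_connected_replace (u := u) (v := v) cS).
  by move=> e /(subsetP sub).
move=> uS vS; have [aS bS] := abS uS vS.
have reach s t c : [set s; t] = [set u; v] -> s \in S -> c \in S ->
    c \in side E s t -> connect (induced S (gadj E')) s c.
  move=> st sS cS' cs; have stE : [set s; t] \in E by rewrite st.
  have /induced_connectedP cI := induced_connectedI cS (side_connected E s t).
  have sI : s \in S :&: side E s t by rewrite in_setI sS side_self.
  have cI' : c \in S :&: side E s t by rewrite in_setI cS' cs.
  apply: connect_subrel (cI s c sI cI') => x y xy.
  case/and3P: (xy) => /setIP[xS _] /setIP[yS _] _.
  rewrite /induced /= xS yS; apply: (gadjS sub); rewrite -st.
  by apply: induced_gadjD xy; rewrite !in_setI (negbTE (side_notin stE)) andbF orbT.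
have nab : a != b by apply: contraNneq b_side => <-.
apply: connect_trans (reach u v a erefl uS aS a_side) _.
apply: connect_trans (connect1 (_ : induced S (gadj E') a b)) _.
  by rewrite /induced /= aS bS swap_edge_adj.
rewrite connect_inducedC; apply: (reach v u b (setUC _ _) vS bS).
exact: (side_compl uvE b_side).
Qed.

End SwapEdge.

End Tree.

End Graphs.

Section Hypergraphs.
Variables (T : finType) (H : hypergraph T).
Implicit Types (E : {set {set T}}) (S f g : {set T}).

Lemma IcapP x g :
  reflect (forall f, f \in H -> g \subset f -> x \in f) (x \in Icap H g).
Proof.
rewrite /Icap -big_filter bigcap_seq; apply: (iffP bigcapP) => [xI f fH gf|xH f].
  by apply: xI; rewrite mem_filter gf.
by rewrite mem_filter => /andP[gf fH]; apply: xH.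
Qed.

Lemma sub_Icap g : g \subset Icap H g.
Proof. by apply/subsetP=> x xg; apply/IcapP=> f _ /subsetP; apply. Qed.

Lemma Icap_sub_edge f g : f \in H -> g \subset f -> Icap H g \subset f.
Proof. by move=> fH gf; apply/subsetP=> x /IcapP; apply. Qed.

Lemma obtainable_Icap g : g != set0 -> Icap H g != setT -> obtainable H (Icap H g).
Proof.
move=> /set0Pn[x xg]; rewrite /Icap big_seq_cond.
set I := \big[_/_]_(e <- H | _) e => nT.
pose K (X : {set T}) := g \subset X /\ (X = setT \/ obtainable H X).
have [_ [IT|//]] : K I; last by rewrite IT eqxx in nT.
rewrite /I; apply: (big_ind K).
- by split; [apply: subsetT|left].
- move=> X Y [gX oX] [gY oY]; split; first by rewrite subsetI gX.
  case: oX => [->|oX]; first by rewrite setTI.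
  case: oY => [->|oY]; first by rewrite setIT; right.
  right; apply: ob_cap oX oY _; apply/set0Pn; exists x.
  by rewrite inE (subsetP gX) ?(subsetP gY).
- by move=> e /andP[eH ge]; split=> //; right; apply: ob_edge.
Qed.

Lemma obtainable_neq0 S : (forall e, e \in H -> e != set0) ->
  obtainable H S -> S != set0.
Proof.
move=> ne; elim=> {S} [e /ne //|A B _ _ _ _ //|F /set0Pn[A AF] _ IH _].
by case/set0Pn: (IH A AF) => x xA; apply/set0Pn; exists x; apply/bigcupP; exists A.
Qed.

Lemma obtainable_connected E S : host_tree H E -> obtainable H S ->
  induced_connected E S.
Proof.
case=> tE hE; elim=> {S} [e /hE //|A B _ cA _ cB _|F _ _ cA cF].
  exact: induced_connectedI.
exact: induced_connected_bigcup.
Qed.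

Lemma Icap_sub_obtainable E S u v : host_tree H E -> [set u; v] \in E ->
  obtainable H S -> u \in S -> v \in S -> Icap H [set u; v] \subset S.
Proof.
move=> hE uvE; elim=> {S} [e eH|A B _ IA _ IB _|F _ obF IH cF] uS vS.
- by apply: Icap_sub_edge eH _; rewrite subUset !sub1set uS.
- by move: uS vS; rewrite !inE => /andP[uA uB] /andP[vA vB]; rewrite subsetI IA ?IB.
have cA A : A \in F -> induced_connected E A.
  by move=> AF; apply: obtainable_connected hE (obF A AF).
have [A AF [uA vA]] := family_edge_member hE.1 uvE cF cA uS vS.
exact: subset_trans (IH A AF uA vA) (bigcup_sup A AF).
Qed.

Lemma comp_edge_edge e : e \in H -> comp_edge H e.
Proof.
move=> eH; have [->|neT] := eqVneq e setT; first by left.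
by right; right; split=> //; apply: ob_edge.
Qed.

Lemma comp_edge_connected E S : host_tree H E -> comp_edge H S ->
  induced_connected E S.
Proof.
move=> hE [->|[[x ->]|[obS _]]]; first by case: hE => -[].
  by apply: induced_connected_small; rewrite cards1.
exact: obtainable_connected hE obS.
Qed.

Lemma host_tree_basic E : is_tree E ->
  host_tree H E <-> forall S, basic_set H S -> induced_connected E S.
Proof.
move=> tE; split=> [hE S [cS _]|cB]; first exact: comp_edge_connected hE cS.
suff cC n S : #|S| <= n -> comp_edge H S -> induced_connected E S.
  by split=> // e eH; apply: (cC #|e|) => //; apply: comp_edge_edge.
elim: n S => [|n IH] S Sn cS.
  by apply: induced_connected_small; apply: leq_trans Sn _.
have [S_le1|S_gt1] := leqP #|S| 1; first exact: induced_connected_small.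
have [bS|nbS] := classic (basic_set H S); first exact: cB.
have [F [_ FA cF <-]] : exists F : {set {set T}}, [/\ F != set0,
    (forall A, A \in F -> comp_edge H A /\ A \proper S), family_connected F &
    \bigcup_(A in F) A = S].
  by apply: NNPP => nF; apply: nbS.
apply: induced_connected_bigcup cF _ => A /FA[cA /proper_card AS].
by apply: IH cA; rewrite -ltnS (leq_trans AS Sn).
Qed.

Lemma host_tree_Icap E E' : host_tree H E ->
  host_tree H E' <->
  is_tree E' /\ forall g, g \in E -> induced_connected E' (Icap H g).
Proof.
move=> hE; split=> [hE'|[tE' cI]].
  split=> [|g gE]; first exact: hE'.1.
  have [->|neT] := eqVneq (Icap H g) setT; first by case: hE' => -[].
  exact: obtainable_connected hE' (obtainable_Icap (tree_edge_neq0 hE.1 gE) neT).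
split=> // f fH; have [f_le1|f_gt1] := leqP #|f| 1.
  exact: induced_connected_small.
have G_between g : g \in E -> g \subset f -> g \subset Icap H g /\ Icap H g \subset f.
  by move=> _ gf; rewrite sub_Icap Icap_sub_edge.
rewrite -(bigcup_edge_images (hE.2 f fH) G_between f_gt1).
apply: induced_connected_bigcup => [|_ /imsetP[g /setIdP[gE _] ->]].
  exact: (edge_images_connected hE.1 (hE.2 f fH) G_between).
exact: cI.
Qed.

Lemma swap_edge_host_tree E u v a b : host_tree H E -> [set u; v] \in E ->
  a \in side E u v -> b \notin side E u v ->
  host_tree H (swap_edge E u v a b) <->
  a \in Icap H [set u; v] /\ b \in Icap H [set u; v].
Proof.
move=> hE uvE a_side b_side; have tE := hE.1.
split=> [[_ hE'] | [aI bI]].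
  split; apply/IcapP=> f fH; rewrite subUset !sub1set => /andP[uf vf];
  by case: (swap_edge_induced_mem tE uvE (hE' f fH) uf vf).
split; first exact: swap_edge_tree.
move=> f fH; apply: (swap_edge_induced_connected tE uvE a_side b_side (hE.2 f fH)).
move=> uf vf; have uvf : [set u; v] \subset f by rewrite subUset !sub1set uf.
by split; apply: (subsetP (Icap_sub_edge fH uvf)).
Qed.

Lemma Icap_swap_edge E u v z : host_tree H E -> [set u; v] \in E ->
  z \in Icap H [set u; v] <->
  host_tree H (if z \in side E u v then swap_edge E u v z v
               else swap_edge E u v u z).
Proof.
move=> hE uvE; have tE := hE.1.
have uI : u \in Icap H [set u; v] by rewrite (subsetP (sub_Icap _)) ?set21.
have vI : v \in Icap H [set u; v] by rewrite (subsetP (sub_Icap _)) ?set22.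
case: ifP => [zs|/negbT zs];
  by rewrite swap_edge_host_tree ?side_notin ?side_self //; split=> [zI|[]].
Qed.

End Hypergraphs.

Section Transfer.
Variables (T : finType) (H1 H2 : hypergraph T).

Lemma comp_edge_transfer E S : (forall e, e \in H1 -> e != set0) ->
  host_tree H1 E -> (forall g, g \in E -> Icap H1 g = Icap H2 g) ->
  comp_edge H1 S -> comp_edge H2 S.
Proof.
move=> ne1 hE eqI [->|[[x ->]|[obS nT]]]; [by left|by right; left; exists x|].
have [S_le1|S_gt1] := leqP #|S| 1.
  have /cards1P[x ->] : #|S| == 1.
    by rewrite eqn_leq S_le1 card_gt0 (obtainable_neq0 ne1 obS).
  by right; left; exists x.
right; right; split=> //.
have cS := obtainable_connected hE obS.
have G_between g : g \in E -> g \subset S -> g \subset Icap H2 g /\ Icap H2 g \subset S.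
  move=> gE gS; rewrite sub_Icap -eqI //; split=> //.
  have [u [v [_ guv]]] := tree_edgeP hE.1 gE; subst g.
  by apply: Icap_sub_obtainable hE gE obS _ _; apply: (subsetP gS); rewrite ?set21 ?set22.
rewrite -(bigcup_edge_images cS G_between S_gt1); apply: ob_cup.
- exact: (edge_images_neq0 (Icap H2) cS S_gt1).
- move=> _ /imsetP[g /setIdP[gE gS] ->]; apply: obtainable_Icap.
    exact: (tree_edge_neq0 hE.1 gE).
  apply: contraNneq nT => IT; rewrite eqEsubset subsetT -IT.
  exact: (G_between g gE gS).2.
- exact: (edge_images_connected hE.1 cS G_between).
Qed.

Lemma basic_set_transfer :
  (forall S, comp_edge H1 S <-> comp_edge H2 S) ->
  forall S, basic_set H1 S -> basic_set H2 S.
Proof.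
move=> eqC S [cS [S_gt1 nF]]; split; first exact/eqC.
split=> // -[F [F0 FA cF FU]]; apply: nF; exists F; split=> // A /FA[cA pA].
by split=> //; apply/eqC.
Qed.

End Transfer.

Section Equivalence.
Variables (T : finType) (H1 H2 : hypergraph T).

Lemma equivalent_Icap E g : host_tree H1 E -> host_tree H2 E ->
  equivalent H1 H2 -> g \in E -> Icap H1 g = Icap H2 g.
Proof.
move=> hE1 hE2 eqv gE; have [u [v [_ guv]]] := tree_edgeP hE1.1 gE; subst g.
apply/setP=> z; apply/idP/idP.
  by move/(Icap_swap_edge z hE1 gE)/eqv/(Icap_swap_edge z hE2 gE).
by move/(Icap_swap_edge z hE2 gE)/eqv/(Icap_swap_edge z hE1 gE).
Qed.

Lemma Icap_equivalent E : host_tree H1 E -> host_tree H2 E ->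
  (forall g, g \in E -> Icap H1 g = Icap H2 g) -> equivalent H1 H2.
Proof.
move=> hE1 hE2 eqI E'; rewrite (host_tree_Icap _ hE1) (host_tree_Icap _ hE2).
by split=> -[tE' cI]; split=> // g gE; [rewrite -eqI|rewrite eqI] => //; apply: cI.
Qed.

Lemma equivalent_basic_set E : (forall e, e \in H1 -> e != set0) ->
  (forall e, e \in H2 -> e != set0) -> host_tree H1 E ->
  equivalent H1 H2 -> forall S, basic_set H1 S <-> basic_set H2 S.
Proof.
move=> ne1 ne2 hE1 eqv; have hE2 : host_tree H2 E by apply/eqv.
have eqI := equivalent_Icap hE1 hE2 eqv.
have eqC S : comp_edge H1 S <-> comp_edge H2 S.
  split; first exact: comp_edge_transfer ne1 hE1 eqI.
  by apply: comp_edge_transfer ne2 hE2 _ => g /eqI ->.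
by move=> S; split; apply: basic_set_transfer => S'; [|split=> /eqC].
Qed.

Lemma basic_set_equivalent :
  (forall S, basic_set H1 S <-> basic_set H2 S) -> equivalent H1 H2.
Proof.
move=> eqB E; split=> hE; have tE := hE.1.
  by apply/(host_tree_basic H2 tE) => S /eqB; apply: (host_tree_basic H1 tE).1.
by apply/(host_tree_basic H1 tE) => S /eqB; apply: (host_tree_basic H2 tE).1.
Qed.

End Equivalence.

Theorem mainTheorem6 (T : finType) (H1 H2 : hypergraph T) :
  (forall e, e \in H1 -> e != set0) ->
  (forall e, e \in H2 -> e != set0) ->
  hypertree H1 -> hypertree H2 ->
  (equivalent H1 H2 <-> (forall S, basic_set H1 S <-> basic_set H2 S)) /\
  (forall E : {set {set T}}, host_tree H1 E -> host_tree H2 E ->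
     (equivalent H1 H2 <->
      (forall u v : T, [set u; v] \in E ->
         Icap H1 [set u; v] = Icap H2 [set u; v]))).
Proof.
(* [hypertree H2] is redundant: a host tree of [H1] is one of [H2] as soon as
   the two hypergraphs are equivalent. *)
move=> ne1 ne2 [E0 hE0] _; split=> [|E hE1 hE2].
  by split; [apply: equivalent_basic_set ne1 ne2 hE0|apply: basic_set_equivalent].
split=> [eqv u v|eqI]; first exact: equivalent_Icap.
apply: (Icap_equivalent hE1 hE2) => g gE.
by have [u [v [_ guv]]] := tree_edgeP hE1.1 gE; subst g; apply: eqI.
Qed.
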